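(* Let $B$ be a path-connected space, $b_0\in B$, and let $p\colon E\to B$ be a disk-hedgehog covering. Then for every small loop $\alpha$ at $b_0$, the class $[\alpha]$ is the neutral element of the monodromy group $\pi(p,b_0)$.
   Context: All maps are continuous; a Peano space is a connected, locally path-connected space. For a class $\mathcal{P}$ of spaces, $p\colon E\to B$ is a $\mathcal{P}$-covering if for every $e_0\in E$, $X\in\mathcal{P}$, $x_0\in X$ and map $f\colon X\to B$ with $f(x_0)=p(e_0)$ there is a unique map $g\colon X\to E$ with $p\circ g=f$, $g(x_0)=e_0$. A directed wedge is $(Z,z_0)=\bigvee_{s\in S}(Z_s,z_s)$, a wedge of pointed Peano spaces indexed by a directed set $S$, topologized so that $U\subset Z\setminus\{z_0\}$ is open iff each $U\cap Z_s$ is open, and $U\ni z_0$ is an open neighborhood of $z_0$ iff each $U\cap Z_s$ is open and there is $t\in S$ with $Z_s\subset U$ for all $s>t$. A disk-hedgehog is a directed wedge with each $Z_s\cong D^2$; a disk-hedgehog covering is a $\mathcal{P}$-covering for $\mathcal{P}$ the class of all disk-hedgehogs (paths lift uniquely). The monodromy group $\pi(p,b_0)$ is the set of loops at $b_0$ modulo $\alpha\sim\beta$ iff any lifts $\tilde\alpha,\tilde\beta$ with $\tilde\alpha(0)=\tilde\beta(0)$ satisfy $\tilde\alpha(1)=\tilde\beta(1)$, with product induced by concatenation; $[\alpha]$ is neutral iff all lifts of $\alpha$ are loops. A loop $\alpha$ at $b_0$ is small if for every neighborhood $U$ of $b_0$ in $B$, $\alpha$ is homotopic relative to $\{0,1\}$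 (endpoints fixed at $b_0$) to a loop contained in $U$. *)

From HB Require Import structures.
From mathcomp Require Import all_boot all_order all_algebra.
From mathcomp Require Import all_classical all_reals all_analysis.
From mathcomp Require Import Rstruct Rstruct_topology.
Set Implicit Arguments.
Unset Strict Implicit.
Unset Printing Implicit Defensive.
Import Order.TTheory GRing.Theory Num.Theory.
Local Open Scope classical_set_scope.
Local Open Scope ring_scope.

Notation RR := Rdefinitions.R.

(* A path in T is a map R -> T continuous on [0,1]; only its values on
   [0,1] matter. *)
Definition unitI : set RR := [set t | 0 <= t <= 1].
Definition unitSq : set (RR * RR) := [set st | unitI st.1 /\ unitI st.2].

Definition is_path {T : topologicalType} (a : RR -> T) :=
  {within unitI, continuous a}.

Definition is_loop_at {T : topologicalType} (x : T) (a : RR -> T) :=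
  is_path a /\ a 0 = x /\ a 1 = x.

Definition path_connected (T : topologicalType) :=
  forall x y : T, exists a : RR -> T, is_path a /\ a 0 = x /\ a 1 = y.

Definition loop_homotopic {T : topologicalType} (x : T) (a b : RR -> T) :=
  exists H : RR * RR -> T,
    {within unitSq, continuous H} /\
    (forall t, unitI t -> H (t, 0) = a t) /\
    (forall t, unitI t -> H (t, 1) = b t) /\
    (forall s, unitI s -> H (0, s) = x /\ H (1, s) = x).

Definition small_loop {T : topologicalType} (x : T) (a : RR -> T) :=
  is_loop_at x a /\
  forall U : set T, nbhs x U ->
    exists b : RR -> T, is_loop_at x b /\ (forall t, unitI t -> U (b t)) /\
      loop_homotopic x a b.

Definition disk : set (RR * RR) := [set q | q.1 ^+ 2 + q.2 ^+ 2 <= 1].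
Definition disk_open (A : set (RR * RR)) :=
  exists O : set (RR * RR), open O /\ A = O `&` disk.

Definition directed_rel (S : Type) (le : S -> S -> Prop) :=
  (exists s : S, True) /\ (forall s, le s s) /\
  (forall r s t, le r s -> le s t -> le r t) /\
  (forall s t, exists u, le s u /\ le t u).

Definition gt_rel (S : Type) (le : S -> S -> Prop) (s t : S) :=
  le t s /\ ~ le s t.

(* The directed wedge of copies of D^2 indexed by S, the s-th copy pointed
   at base s \in D^2.  A point is either the wedge point (None) or a pair
   (s, x) with x in D^2 and x <> base s. *)
Definition hh_pt (S : Type) (base : S -> RR * RR) :=
  option {q : S * (RR * RR) | disk q.2 /\ q.2 <> base q.1}.

Definition hh_inj (S : Type) (base : S -> RR * RR) (s : S) (x : RR * RR)
  : hh_pt base :=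
  match pselect (disk x /\ x <> base s) with
  | left h => Some (exist (fun q : S * (RR * RR) => disk q.2 /\ q.2 <> base q.1)
                          (s, x) h)
  | right _ => None
  end.

Definition hh_open (S : Type) (le : S -> S -> Prop) (base : S -> RR * RR)
    (U : set (hh_pt base)) :=
  (forall s : S, disk_open [set x | disk x /\ U (hh_inj base s x)]) /\
  (U None -> exists t : S, forall s, gt_rel le s t ->
                forall x, disk x -> U (hh_inj base s x)).

Definition hh_continuous (S : Type) (le : S -> S -> Prop)
    (base : S -> RR * RR) (T : topologicalType) (f : hh_pt base -> T) :=
  forall V : set T, open V -> @hh_open S le base (f @^-1` V).

Definition disk_hedgehog_covering (E B : topologicalType) (p : E -> B) :=
  continuous p /\
  forall (S : Type) (le : S -> S -> Prop) (base : S -> RR * RR),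
    directed_rel le -> (forall s, disk (base s)) ->
    forall (e0 : E) (x0 : hh_pt base) (f : hh_pt base -> B),
      @hh_continuous S le base B f -> f x0 = p e0 ->
      exists! g : hh_pt base -> E,
        @hh_continuous S le base E g /\ (forall x, p (g x) = f x) /\ g x0 = e0.

Definition is_lift (E B : topologicalType) (p : E -> B) (a : RR -> B)
    (la : RR -> E) :=
  is_path la /\ forall t, unitI t -> p (la t) = a t.

Definition monodromy_equiv (E B : topologicalType) (p : E -> B)
    (a b : RR -> B) :=
  forall la lb : RR -> E, is_lift p a la -> is_lift p b lb ->
    la 0 = lb 0 -> la 1 = lb 1.

(* the constant loop, representing the neutral element of pi(p, b0) *)
Definition cst_loop (B : Type) (b0 : B) : RR -> B := fun _ => b0.

(* Lifting is done through the disk, the hedgehog with a single spike: disk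
   maps lift uniquely.  The interval and the square are retracts of the disk,
   so paths and homotopies lift uniquely as well, and homotopic loops have the
   same monodromy.
   For a small loop alpha at b0, pick for every neighbourhood U of b0 a loop
   alpha_U inside U homotopic to alpha, and glue these loops into one map on the
   hedgehog indexed by the neighbourhoods of b0; it is continuous because the
   spikes shrink to b0.  Its lift is continuous at the wedge point, so every open
   W around the start e0 of the lift of alpha contains the endpoint of the lift
   of some alpha_U, which is the endpoint e1 of the lift of alpha.  Finally e0
   and e1 lie in one fibre and cannot be separated this way, so the disk map
   sending one point to e0 and all others to e1 is continuous; it lifts the
   same constant map as the constant map e0, whence e1 = e0. *)

From mathcomp Require Import all_boot all_order all_algebra.
From mathcomp Require Import all_classical all_reals all_analysis.
From mathcomp Require Import Rstruct Rstruct_topology.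
From mathcomp Require Import lra.
Import Order.TTheory GRing.Theory Num.Theory.
Local Open Scope classical_set_scope.
Local Open Scope ring_scope.

Lemma continuous_pair {T U V : topologicalType} (f : T -> U) (g : T -> V) :
  continuous f -> continuous g -> continuous (fun x => (f x, g x)).
Proof.
move=> cf cg x.
by apply: (@cvg_pair _ _ _ (nbhs x) (nbhs (f x)) (nbhs (g x))); [exact: cf | exact: cg].
Qed.

Lemma within_continuousP {X Y : topologicalType} (A : set X) (f : X -> Y) :
  {within A, continuous f} <->
  forall V, open V -> exists2 W, open W & W `&` A = f @^-1` V `&` A.
Proof.
rewrite continuousP; split => fA V oV; first by have /open_subspaceP := fA V oV.
by apply/open_subspaceP; exact: fA.
Qed.

Lemma within_continuous_precomp {X Y Z : topologicalType} {A : set X} {C : set Z}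
    {f : X -> Y} {c : Z -> X} :
  {within A, continuous f} -> continuous c -> (forall z, C z -> A (c z)) ->
  {within C, continuous (f \o c)}.
Proof.
move=> /within_continuousP fA /continuousP cc cCA; apply/within_continuousP => V oV.
have [W oW WA] := fA V oV; exists (c @^-1` W); first exact: cc.
apply/seteqP; split => z [Wz Cz]; split => //.
- by have [] : (f @^-1` V `&` A) (c z) by rewrite -WA; split => //; exact: cCA.
- by have [] : (W `&` A) (c z) by rewrite WA; split => //; exact: cCA.
Qed.

Lemma within_continuous_postcomp {X Y Z : topologicalType} {A : set X}
    {f : X -> Y} {h : Y -> Z} :
  {within A, continuous f} -> continuous h -> {within A, continuous (h \o f)}.
Proof. by move=> fA ch; apply: within_continuous_comp => // y _; exact: ch. Qed.

Lemma disk_continuousP {T : topologicalType} (f : RR * RR -> T) :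
  {within disk, continuous f} <->
  forall V, open V -> disk_open [set x | disk x /\ V (f x)].
Proof.
have setI_disk V : f @^-1` V `&` disk = [set x | disk x /\ V (f x)].
  by apply/seteqP; split => x [].
rewrite within_continuousP; split => fD V oV.
  by have [W oW WD] := fD V oV; exists W; rewrite WD setI_disk.
by have [W [oW WD]] := fD V oV; exists W; rewrite // setI_disk.
Qed.

Definition hh_glue {S : Type} (base : S -> RR * RR) {T : Type}
    (phi : S -> RR * RR -> T) (c : T) : hh_pt base -> T :=
  fun y => if y is Some q then phi (sval q).1 (sval q).2 else c.

Section HedgehogGlue.
Context {S : Type} {base : S -> RR * RR} {T : topologicalType}.

Lemma hh_inj_base (s : S) : hh_inj base s (base s) = None.
Proof. by rewrite /hh_inj; case: pselect => // -[]. Qed.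

Lemma hh_glue_inj {phi : S -> RR * RR -> T} {c s x} :
  disk x -> phi s (base s) = c -> hh_glue base phi c (hh_inj base s x) = phi s x.
Proof.
move=> Dx phic; rewrite /hh_inj; case: pselect => //= xNbase.
by have [-> //|x_neq] := pselect (x = base s); case: xNbase.
Qed.

Lemma hh_glue_petal_open (phi : S -> RR * RR -> T) c :
  (forall s, phi s (base s) = c) -> (forall s, {within disk, continuous phi s}) ->
  forall V, open V -> forall s,
    disk_open [set x | disk x /\ V (hh_glue base phi c (hh_inj base s x))].
Proof.
move=> phic phiD V oV s; have /disk_continuousP/(_ V oV) := phiD s.
congr disk_open; apply/seteqP; split => x [Dx]; split => //.
- by rewrite hh_glue_inj.
- by rewrite -(hh_glue_inj Dx (phic s)).
Qed.

Lemma hh_continuous_petal {le : S -> S -> Prop} {g : hh_pt base -> T} (s : S) :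
  hh_continuous le g -> {within disk, continuous (fun x => g (hh_inj base s x))}.
Proof. by move=> cg; apply/disk_continuousP => V oV; exact: (cg V oV).1. Qed.

End HedgehogGlue.

Definition unit_le (_ _ : unit) := True.

Lemma directed_unit_le : directed_rel unit_le.
Proof. by split; [exists tt | split; [|split; [|exists tt]]]. Qed.

Lemma hh_continuous_one_petal {T : topologicalType} (bs : RR * RR)
    {phi : RR * RR -> T} :
  {within disk, continuous phi} ->
  hh_continuous unit_le (hh_glue (fun _ => bs) (fun _ => phi) (phi bs)).
Proof.
move=> phiD V oV; split; first exact: hh_glue_petal_open.
by move=> _; exists tt => s [_ /(_ I)].
Qed.

Section DiskLifting.
Context {E B : topologicalType} {p : E -> B} (cov : disk_hedgehog_covering p).
Context {bs : RR * RR} {phi : RR * RR -> B} {e0 : E}.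
Hypotheses (Dbs : disk bs) (phiD : {within disk, continuous phi}).
Hypothesis phi_bs : phi bs = p e0.

Let one_petal_lift := cov.2 unit unit_le (fun _ => bs) directed_unit_le
  (fun _ => Dbs) e0 None _ (hh_continuous_one_petal bs phiD) phi_bs.

Lemma disk_lift_exists : exists Phi : RR * RR -> E,
  [/\ {within disk, continuous Phi}, forall x, disk x -> p (Phi x) = phi x
     & Phi bs = e0].
Proof.
have [g [[cg [pg g_None]] _]] := one_petal_lift.
exists (fun x => g (hh_inj (fun _ => bs) tt x)); split.
- exact: hh_continuous_petal tt cg.
- by move=> x Dx; rewrite pg hh_glue_inj.
- by rewrite hh_inj_base.
Qed.

Lemma disk_lift_unique (Phi1 Phi2 : RR * RR -> E) :
  {within disk, continuous Phi1} -> (forall x, disk x -> p (Phi1 x) = phi x) ->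
  Phi1 bs = e0 ->
  {within disk, continuous Phi2} -> (forall x, disk x -> p (Phi2 x) = phi x) ->
  Phi2 bs = e0 ->
  forall x, disk x -> Phi1 x = Phi2 x.
Proof.
have [g [_ g_uniq]] := one_petal_lift.
have glue_eq Phi : {within disk, continuous Phi} ->
    (forall x, disk x -> p (Phi x) = phi x) -> Phi bs = e0 ->
    hh_glue (fun _ => bs) (fun _ => Phi) e0 = g.
  move=> PhiD pPhi Phi_bs; apply/esym/g_uniq; split.
    by rewrite -Phi_bs; exact: hh_continuous_one_petal.
  split => //; case=> [[[s y] [Dy _]]|] /=; [exact: pPhi | by rewrite phi_bs].
move=> Phi1D pPhi1 Phi1_bs Phi2D pPhi2 Phi2_bs x Dx.
have := glue_eq _ Phi1D pPhi1 Phi1_bs; rewrite -(glue_eq _ Phi2D pPhi2 Phi2_bs).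
by move=> /(congr1 (fun f => f (hh_inj (fun _ => bs) tt x))); rewrite !hh_glue_inj.
Qed.

End DiskLifting.

Section DiskRetractLifting.
Context {E B : topologicalType} {p : E -> B} (cov : disk_hedgehog_covering p).
Context {X : topologicalType} {A : set X} {j : X -> RR * RR} {r : RR * RR -> X}.
Hypotheses (j_cont : continuous j) (r_cont : continuous r).
Hypotheses (jA : forall a, A a -> disk (j a)) (rD : forall x, disk x -> A (r x)).
Hypothesis rjK : forall a, A a -> r (j a) = a.

Lemma retract_lift_exists (f : X -> B) (a0 : X) (e0 : E) :
  {within A, continuous f} -> A a0 -> f a0 = p e0 ->
  exists g : X -> E,
    [/\ {within A, continuous g}, forall a, A a -> p (g a) = f a & g a0 = e0].
Proof.
move=> fA Aa0 fa0.
have frD : {within disk, continuous (f \o r)}.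
  exact: within_continuous_precomp fA r_cont rD.
have fr_ja0 : (f \o r) (j a0) = p e0 by rewrite /= rjK.
have [Phi [PhiD pPhi Phi_a0]] := disk_lift_exists cov (jA _ Aa0) frD fr_ja0.
exists (Phi \o j); split.
- exact: within_continuous_precomp PhiD j_cont jA.
- by move=> a Aa; rewrite /= pPhi /= ?rjK //; exact: jA.
- exact: Phi_a0.
Qed.

Lemma retract_lift_unique (g1 g2 : X -> E) (a0 : X) :
  {within A, continuous g1} -> {within A, continuous g2} ->
  (forall a, A a -> p (g1 a) = p (g2 a)) -> A a0 -> g1 a0 = g2 a0 ->
  forall a, A a -> g1 a = g2 a.
Proof.
move=> g1A g2A pg12 Aa0 g12a0 a Aa.
have g1rD := within_continuous_precomp g1A r_cont rD.
have g2rD := within_continuous_precomp g2A r_cont rD.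
have pg1rD : {within disk, continuous (p \o (g1 \o r))}.
  exact: within_continuous_postcomp g1rD cov.1.
have pg1r_ja0 : (p \o (g1 \o r)) (j a0) = p (g1 a0) by rewrite /= rjK.
have := disk_lift_unique cov (jA _ Aa0) pg1rD pg1r_ja0 _ _
  g1rD _ _ g2rD _ _ _ (jA _ Aa).
rewrite /= !rjK // => lift_eq; apply: lift_eq => // x Dx.
by rewrite -pg12 //; exact: rD.
Qed.

End DiskRetractLifting.

Lemma unitI0 : unitI 0.
Proof. by rewrite /unitI /= lexx ler01. Qed.

Lemma unitI1 : unitI 1.
Proof. by rewrite /unitI /= lexx ler01. Qed.

#[local] Hint Resolve unitI0 unitI1 : core.

Definition clamp (x : RR) : RR := Order.max 0 (Order.min x 1).

Lemma continuous_clamp : continuous clamp.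
Proof.
move=> x; apply: (@continuous_max RR _ (fun=> 0) (fun y : RR => Order.min y 1) x).
  exact: cvg_cst.
by apply: (@continuous_min RR _ id (fun=> 1) x); [exact: cvg_id | exact: cvg_cst].
Qed.

Lemma unitI_clamp x : unitI (clamp x).
Proof. by rewrite /unitI /clamp /= le_max lexx ge_max ler01 ge_min lexx orbT. Qed.

Lemma clamp_id x : unitI x -> clamp x = x.
Proof. by case/andP => x_ge0 x_le1; rewrite /clamp min_l // max_r. Qed.

Definition interval_to_disk (t : RR) : RR * RR := (t - 2^-1, 0).
Definition interval_retraction (q : RR * RR) : RR := clamp (q.1 + 2^-1).

Definition square_to_disk (q : RR * RR) : RR * RR := (q.1 - 2^-1, q.2 - 2^-1).
Definition square_retraction (q : RR * RR) : RR * RR :=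
  (clamp (q.1 + 2^-1), clamp (q.2 + 2^-1)).

Lemma continuous_interval_to_disk : continuous interval_to_disk.
Proof.
apply: continuous_pair => [t|]; last exact: cst_continuous.
by apply: (@continuousB _ RR^o _ id (fun=> 2^-1)); [exact: cvg_id | exact: cvg_cst].
Qed.

Lemma continuous_interval_retraction : continuous interval_retraction.
Proof.
move=> q; apply: (@continuous_comp _ _ _ (fun q : RR * RR => q.1 + 2^-1) clamp).
  by apply: (@continuousD _ RR^o); [exact: cvg_fst | exact: cvg_cst].
exact: continuous_clamp.
Qed.

Lemma continuous_square_to_disk : continuous square_to_disk.
Proof.
apply: continuous_pair => q; apply: (@continuousB _ RR^o);
  [exact: cvg_fst | exact: cvg_cst | exact: cvg_snd | exact: cvg_cst].
Qed.

Lemma continuous_square_retraction : continuous square_retraction.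
Proof.
apply: continuous_pair; first exact: continuous_interval_retraction.
move=> q; apply: (@continuous_comp _ _ _ (fun q : RR * RR => q.2 + 2^-1) clamp).
  by apply: (@continuousD _ RR^o); [exact: cvg_snd | exact: cvg_cst].
exact: continuous_clamp.
Qed.

Lemma sqr_sub_half_le x : unitI x -> (x - 2^-1) ^+ 2 <= 4^-1 :> RR.
Proof. by case/andP => x_ge0 x_le1; nra. Qed.

Lemma disk_interval_to_disk t : unitI t -> disk (interval_to_disk t).
Proof. by move=> /sqr_sub_half_le; rewrite /disk /= expr0n addr0; lra. Qed.

Lemma disk_square_to_disk q : unitSq q -> disk (square_to_disk q).
Proof. by case=> /sqr_sub_half_le s_le /sqr_sub_half_le t_le; rewrite /disk /=; lra. Qed.

Lemma unitI_interval_retraction q : unitI (interval_retraction q).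
Proof. exact: unitI_clamp. Qed.

Lemma unitSq_square_retraction q : unitSq (square_retraction q).
Proof. by split; exact: unitI_clamp. Qed.

Lemma interval_retractionK t : unitI t -> interval_retraction (interval_to_disk t) = t.
Proof. by move=> It; rewrite /interval_retraction /= subrK clamp_id. Qed.

Lemma square_retractionK q : unitSq q -> square_retraction (square_to_disk q) = q.
Proof. by case: q => s t [Is It]; rewrite /square_retraction /= !subrK !clamp_id. Qed.

Section PathAndHomotopyLifting.
Context {E B : topologicalType} {p : E -> B} (cov : disk_hedgehog_covering p).

Lemma path_lift_unique (g1 g2 : RR -> E) :
  is_path g1 -> is_path g2 -> (forall t, unitI t -> p (g1 t) = p (g2 t)) ->
  g1 0 = g2 0 -> forall t, unitI t -> g1 t = g2 t.
Proof.
move=> g1I g2I pg12 g12_0.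
by apply: (retract_lift_unique cov continuous_interval_retraction disk_interval_to_disk
  (fun x _ => unitI_interval_retraction x) interval_retractionK g1 g2 0).
Qed.

Lemma path_lift_cst (g : RR -> E) :
  is_path g -> (forall t, unitI t -> p (g t) = p (g 0)) ->
  forall t, unitI t -> g t = g 0.
Proof.
move=> gI pg; apply: path_lift_unique => //.
exact/continuous_subspaceT/cst_continuous.
Qed.

Lemma square_lift_exists (H : RR * RR -> B) (e0 : E) :
  {within unitSq, continuous H} -> H (0, 0) = p e0 ->
  exists K : RR * RR -> E,
    [/\ {within unitSq, continuous K}, forall q, unitSq q -> p (K q) = H q
       & K (0, 0) = e0].
Proof.
move=> HI H00; apply: (retract_lift_exists cov continuous_square_to_disk
  continuous_square_retraction disk_square_to_disk
  (fun x _ => unitSq_square_retraction x) square_retractionK _ (0, 0) _ HI _ H00).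
by split.
Qed.

Lemma loop_homotopic_monodromy_equiv {b0 : B} {a b : RR -> B} :
  loop_homotopic b0 a b -> monodromy_equiv p a b.
Proof.
move=> [H [HI [H_a [H_b H_b0]]]] la lb [laI pla] [lbI plb] la_lb_0.
have [|K [KI pK K00]] := square_lift_exists H (la 0) HI; first by rewrite H_a ?pla.
have edge (c : RR -> RR * RR) : continuous c -> (forall t, unitI t -> unitSq (c t)) ->
    is_path (K \o c) := within_continuous_precomp KI.
have horizontal s : unitI s -> is_path (fun t => K (t, s)).
  move=> Is; apply: (edge (fun t => (t, s))) => [|t It]; last by split.
  by apply: continuous_pair => [x|]; [exact: cvg_id | exact: cst_continuous].
have vertical t : unitI t -> (forall s, unitI s -> H (t, s) = b0) ->
    forall s, unitI s -> K (t, s) = K (t, 0).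
  move=> It H_t; apply: (path_lift_cst (fun s => K (t, s))).
    apply: (edge (fun s => (t, s))) => [|s Is]; last by split.
    by apply: continuous_pair => [|x]; [exact: cst_continuous | exact: cvg_id].
  by move=> s Is; rewrite !pK ?H_t //; split.
have bottom : forall t, unitI t -> la t = K (t, 0).
  apply: (path_lift_unique la (fun t => K (t, 0))) => //; first exact: horizontal.
  by move=> u Iu; rewrite pla ?pK ?H_a //; split.
have top : forall t, unitI t -> lb t = K (t, 1).
  apply: (path_lift_unique lb (fun t => K (t, 1))) => //; first exact: horizontal.
  - by move=> u Iu; rewrite plb ?pK ?H_b //; split.
  - by rewrite -la_lb_0 bottom // (vertical 0) // => s Is; exact: (H_b0 s Is).1.
rewrite top // (vertical 1) // -?bottom // => s Is; exact: (H_b0 s Is).2.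
Qed.

End PathAndHomotopyLifting.

Lemma fibre_eq_of_open_nbhs {E B : topologicalType} {p : E -> B}
    (cov : disk_hedgehog_covering p) (e0 e1 : E) :
  p e1 = p e0 -> (forall W, open W -> W e0 -> W e1) -> e1 = e0.
Proof.
move=> pe10 e0_e1.
pose bs : RR * RR := (0, 0).
pose step x := if pselect (x = bs) then e0 else e1.
have step_bs : step bs = e0 by rewrite /step; case: pselect.
have step_neq x : x <> bs -> step x = e1 by rewrite /step; case: pselect.
have Dbs : disk bs by rewrite /disk /= expr0n addr0 ler01.
have D1 : disk (1, 0) by rewrite /disk /= expr0n expr1n addr0.
have cstD (T : topologicalType) (y : T) : {within disk, continuous (fun=> y)}.
  exact/continuous_subspaceT/cst_continuous.
have stepD : {within disk, continuous step}.
  apply/within_continuousP => V oV.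
  have [Ve1|NVe1] := pselect (V e1); last first.
    exists set0; first exact: open0.
    apply/seteqP; split => x [] //= + _.
    have [->|/step_neq ->//] := pselect (x = bs).
    by rewrite step_bs => /(e0_e1 _ oV).
  have [Ve0|NVe0] := pselect (V e0).
    exists setT; first exact: openT.
    apply/seteqP; split => x [_ Dx]; split => //=.
    by have [->|/step_neq ->] := pselect (x = bs); rewrite ?step_bs.
  exists (~` [set bs]).
    apply: closed_openC; apply: accessible_closed_set1; apply: hausdorff_accessible.
    exact: (@norm_hausdorff _ (RR^o * RR^o)%type).
  apply/seteqP; split => x [x_bs Dx]; split => //=.
    by rewrite step_neq.
  by move=> x_eq; move: x_bs; rewrite /preimage /= x_eq step_bs.
have := disk_lift_unique cov Dbs (cstD _ (p e0)) erefl _ _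
  (cstD _ e0) (fun _ _ => erefl) erefl stepD _ step_bs _ D1.
rewrite step_neq => [->//|[/eqP]]; last by rewrite oner_eq0.
by move=> x Dx; rewrite /step; case: pselect.
Qed.

(* The [nat] coordinate makes every index strictly dominated in the sense of [gt_rel]. *)
Definition nbhs_index {T : topologicalType} (x : T) :=
  ({U : set T | nbhs x U} * nat)%type.

Definition nbhs_index_le {T : topologicalType} (x : T) (s t : nbhs_index x) :=
  sval t.1 `<=` sval s.1 /\ (s.2 <= t.2)%N.

Lemma directed_nbhs_index_le {T : topologicalType} (x : T) :
  directed_rel (nbhs_index_le x).
Proof.
split; first by exists (exist _ setT filterT, 0%N).
split; first by move=> s; split.
split.
  move=> r s t [sr rs] [ts st]; split; first exact: subset_trans sr.
  exact: leq_trans rs st.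
move=> s t; exists (exist _ _ (filterI (svalP s.1) (svalP t.1)), maxn s.2 t.2).
by split; split => /=;
  [exact: subIsetl | exact: leq_maxl | exact: subIsetr | exact: leq_maxr].
Qed.

Lemma nbhs_index_succ_gt {T : topologicalType} {x : T} (t : nbhs_index x) :
  gt_rel (nbhs_index_le x) (t.1, t.2.+1) t.
Proof. by split; [split | case=> _ /=; rewrite ltnn]. Qed.

Section SmallLoops.
Context {B : topologicalType} {b0 : B}.

Definition petal_base {S : Type} : S -> RR * RR := fun=> interval_to_disk 0.

Lemma hh_continuous_glue_paths {S : Type} (le : S -> S -> Prop) (ga : S -> RR -> B) :
  (forall s, is_path (ga s)) -> (forall s, ga s 0 = b0) ->
  (forall V, open V -> V b0 ->
    exists t, forall s, gt_rel le s t -> forall u, unitI u -> V (ga s u)) ->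
  hh_continuous le (hh_glue petal_base (fun s x => ga s (interval_retraction x)) b0).
Proof.
move=> gaI ga0 ga_lim.
have ga_base s : ga s (interval_retraction (petal_base s)) = b0.
  by rewrite interval_retractionK ?ga0.
move=> V oV; split.
  apply: hh_glue_petal_open => // s.
  exact: within_continuous_precomp (gaI s) continuous_interval_retraction
    (fun x _ => unitI_interval_retraction x).
move=> /ga_lim-/(_ oV)[t gaV]; exists t => s st x Dx /=.
by rewrite hh_glue_inj //; exact: gaV st _ (unitI_interval_retraction x).
Qed.

Lemma small_loop_lift_end_nbhs {E : topologicalType} {p : E -> B}
    (cov : disk_hedgehog_covering p) (al : RR -> B) (la : RR -> E) :
  small_loop b0 al -> is_lift p al la -> forall W, open W -> W (la 0) -> W (la 1).
Proof.
move=> [[_ [al0 _]] al_small] [laI pla] W oW Wla0.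
have loops_in_nbhs (s : nbhs_index b0) : exists b, [/\ is_loop_at b0 b,
    forall u, unitI u -> sval s.1 (b u) & loop_homotopic b0 al b].
  by have [b [bL [bU hb]]] := al_small _ (svalP s.1); exists b.
have [bf bfP] := choice loops_in_nbhs.
pose f := hh_glue petal_base (fun s x => bf s (interval_retraction x)) b0.
have fC : hh_continuous (nbhs_index_le b0) f.
  apply: hh_continuous_glue_paths => [s|s|V oV Vb0]; first by have [[]] := bfP s.
    by have [[_ []]] := bfP s.
  exists (exist _ V (open_nbhs_nbhs (conj oV Vb0)), 0%N) => s [[sV _] _] u Iu.
  by apply: sV; have [_ bfU _] := bfP s; exact: bfU.
have f_None : f None = p (la 0) by rewrite /f /= -al0 pla.
have [g [[gC [pg g_None]] _]] := cov.2 _ _ petal_base (directed_nbhs_index_le b0)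
  (fun _ => disk_interval_to_disk _ unitI0) (la 0) None f fC f_None.
have gW_None : (g @^-1` W) None by rewrite /preimage /= g_None.
have [t gW] := (gC W oW).2 gW_None.
pose s : nbhs_index b0 := (t.1, t.2.+1).
pose d u := g (hh_inj petal_base s (interval_to_disk u)).
have [[_ [bf0 _]] _ al_bf] := bfP s.
have d_lift : is_lift p (bf s) d.
  split.
    exact: within_continuous_precomp (hh_continuous_petal s gC)
      continuous_interval_to_disk disk_interval_to_disk.
  move=> u Iu; rewrite /d pg /f hh_glue_inj ?interval_retractionK //.
  exact: disk_interval_to_disk.
have d0 : la 0 = d 0 by rewrite /d (hh_inj_base (base := petal_base)) g_None.
rewrite (loop_homotopic_monodromy_equiv cov al_bf la d (conj laI pla) d_lift d0).
exact: gW s (nbhs_index_succ_gt t) _ (disk_interval_to_disk _ unitI1).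
Qed.

End SmallLoops.

Theorem proposition7p8 (E B : topologicalType) (p : E -> B) (b0 : B) :
  path_connected B ->
  disk_hedgehog_covering p ->
  forall alpha : RR -> B, small_loop b0 alpha ->
    monodromy_equiv p alpha (cst_loop b0).
Proof.
move=> _ cov alpha alpha_small la lb [laI pla] [lbI plb] la_lb_0.
have [[_ [alpha0 alpha1]] _] := alpha_small.
have lb_cst : lb 1 = lb 0.
  by apply: (path_lift_cst cov lb lbI) => // t It; rewrite !plb.
rewrite lb_cst -la_lb_0; apply: (fibre_eq_of_open_nbhs cov).
  by rewrite !pla // alpha0 alpha1.
exact: small_loop_lift_end_nbhs cov _ _ alpha_small (conj laI pla).
Qed.
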